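(* Let $\mathcal{D}$ be a set, $\Sigma$ a finite set, $R\subseteq\mathcal{D}^\Sigma$ and $k\ge0$ an integer. Then $R$ admits a $k$-key if and only if $|R|\le|\mathcal{D}|^k$ (cardinal arithmetic when $\mathcal{D}$ is infinite).
   Context: For $R\subseteq\mathcal{D}^\Sigma$ and $\Lambda\subseteq\Sigma$, $\pi_\Lambda R=\{a|_\Lambda:a\in R\}$. For a relation $S\subseteq\mathcal{D}^{\Omega}$, a proper subset $\textup{K}\subset\Omega$ is a $k$-key of $S$ if $|\textup{K}|=k$ and for all $a,b\in S$, $a|_{\textup{K}}=b|_{\textup{K}}$ implies $a=b$. $R\subseteq\mathcal{D}^\Sigma$ admits a $k$-key if there exist a finite set $\textup{T}$ with $\textup{T}\cap\Sigma=\emptyset$ and $\widehat R\subseteq\mathcal{D}^{\textup{T}\cup\Sigma}$ having a $k$-key such that $R=\pi_\Sigma\widehat R$. *)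

From mathcomp Require Import all_boot.
From mathcomp Require Import boolp classical_sets cardinality.
Set Implicit Arguments. Unset Strict Implicit. Unset Printing Implicit Defensive.
Local Open Scope classical_set_scope.

Definition proj_Sigma (D : Type) (T Sigma : finType) (Rh : set (T + Sigma -> D))
  : set (Sigma -> D) := (fun a => fun s => a (inr s)) @` Rh.

Definition is_key (D : Type) (Omega : finType) (k : nat) (S : set (Omega -> D))
  (K : {set Omega}) : Prop :=
  [/\ K \proper [set: Omega], #|K| = k &
      forall a b, S a -> S b -> (forall x, x \in K -> a x = b x) -> a = b].

Definition has_key (D : Type) (Omega : finType) (k : nat) (S : set (Omega -> D)) :=
  exists K : {set Omega}, is_key k S K.

(* R admits a k-key: there is a finite set T disjoint from Sigma (modelled as the
   left summand of the disjoint union T + Sigma) and Rh ⊆ D^(T ⊔ Sigma) having a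
   k-key with R = pi_Sigma Rh. *)
Definition admits_key (D : Type) (Sigma : finType) (k : nat) (R : set (Sigma -> D)) :=
  exists (T : finType) (Rh : set (T + Sigma -> D)),
    has_key k Rh /\ R = proj_Sigma Rh.

From mathcomp Require Import all_boot.
From mathcomp Require Import boolp classical_sets cardinality.
Local Open Scope classical_set_scope.
Local Open Scope card_scope.

(* If K is a k-key of an extension of R, restricting tuples to K is injective,
   so |R| is at most the number of K-tuples, |D|^k.  Conversely, an injection
   f of R into D^k lets us append k fresh attributes holding f(r) to each
   tuple r; these attributes form a k-key, and projecting them away gives R
   back. *)

Lemma card_le_setT_inj {T U : Type} (u0 : U) (A : set T) :
  A #<= [set: U] -> exists f : T -> U, {in A &, injective f}.
Proof.
move=> /card_leP/injfunPex[g _ g_inj].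
exists (fun t => if pselect (A t) is left At then val (g (SigSub (mem_set At)))
                 else u0).
move=> s t /[!inE] As At /=.
case: pselect => // As'; case: pselect => // At' /val_inj E.
by have /(congr1 val) := g_inj _ _ (in_setT _) (in_setT _) E.
Qed.

Section KeyRestriction.
Context {D : Type} {Omega : finType}.

Definition key_restriction (K : {set Omega}) (a : Omega -> D) : 'I_#|K| -> D :=
  fun i => a (enum_val i).

Lemma eq_key_restriction (K : {set Omega}) (a b : Omega -> D) :
  key_restriction K a = key_restriction K b -> {in K, a =1 b}.
Proof.
move=> E x xK; have := congr1 (fun h => h (enum_rank_in xK x)) E.
by rewrite /key_restriction enum_rankK_in.
Qed.

Lemma has_key_card_le (k : nat) (S : set (Omega -> D)) :
  has_key k S -> S #<= [set: 'I_k -> D].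
Proof.
case=> K [_ <- S_key].
have restr_inj : {in S &, injective (key_restriction K)}.
  by move=> a b /[!inE] Sa Sb /eq_key_restriction; apply: S_key.
by rewrite -(card_le_eql (inj_card_eq restr_inj)) card_leT.
Qed.

End KeyRestriction.

Lemma admits_key_card_le (D : Type) (Sigma : finType) (k : nat)
    (R : set (Sigma -> D)) :
  admits_key k R -> R #<= [set: 'I_k -> D].
Proof.
case=> T [Rh [/has_key_card_le Rh_le ->]].
exact: card_le_trans (card_image_le _ _) Rh_le.
Qed.

Section KeyExtension.
Context {D : Type} {Sigma : finType} {k : nat}.
Variables (d0 : D) (f : (Sigma -> D) -> 'I_k -> D).

(* The constant attribute [inl None] keeps the key proper even when [Sigma]
   is empty. *)
Definition key_extension (r : Sigma -> D) : option 'I_k + Sigma -> D :=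
  fun x => match x with
           | inl (Some i) => f r i
           | inl None => d0
           | inr s => r s
           end.

Definition key_attributes : {set option 'I_k + Sigma} :=
  [set inl (Some i) | i : 'I_k].

Lemma key_attributes_proper : key_attributes \proper [set: option 'I_k + Sigma].
Proof.
apply/properP; split; first by apply/fintype.subsetP => x _; apply/mem_set.
by exists (inl None); [apply/mem_set | apply/imsetP => -[]].
Qed.

Lemma card_key_attributes : #|key_attributes| = k.
Proof. by rewrite card_imset ?card_ord // => i j []. Qed.

Lemma proj_key_extension (R : set (Sigma -> D)) :
  proj_Sigma (key_extension @` R) = R.
Proof. by rewrite /proj_Sigma image_comp image_id. Qed.

Lemma key_extension_key (R : set (Sigma -> D)) :
  {in R &, injective f} -> is_key k (key_extension @` R) key_attributes.
Proof.
move=> f_inj; split; [exact: key_attributes_proper | exact: card_key_attributes |].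
move=> _ _ [r Rr <-] [s Rs <-] eq_key.
have f_rs : f r = f s.
  by apply/funext => i; apply: (eq_key (inl (Some i))); apply/imsetP; exists i.
by rewrite (f_inj _ _ (mem_set Rr) (mem_set Rs) f_rs).
Qed.

End KeyExtension.

Lemma card_le_admits_key (D : Type) (Sigma : finType) (k : nat)
    (R : set (Sigma -> D)) :
  inhabited D -> R #<= [set: 'I_k -> D] -> admits_key k R.
Proof.
case=> d0 /(card_le_setT_inj (fun=> d0))[f f_inj].
exists (option 'I_k : finType), (key_extension d0 f @` R).
split; last by rewrite proj_key_extension.
by exists key_attributes; apply: key_extension_key.
Qed.

Theorem lemma20 (D : Type) (Sigma : finType) (R : set (Sigma -> D)) (k : nat)
  (D_nonempty : inhabited D) :
  admits_key k R <-> (R #<= [set: 'I_k -> D])%card.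
Proof.
split; [exact: admits_key_card_le | exact: card_le_admits_key].
Qed.
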